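(* For any positive integer $n$, as formal power series in $z$, \[ \begin{aligned} \frac{ (-tzq;q)_{n} }{ (zq;q)_{n} } &= 1+ \sum_{m=1}^{n-1} \left( \overline{ {n+m-1 \brack 2m } }_{q,t} + t\, \overline{ {n+m-2 \brack 2m-1 } }_{q,t} \right) z^{2m} q^{2m^2+2m} \frac{ (-tzq;q)_{m} }{(zq;q)_{m}} \\ &\quad+\sum_{m=1}^{n} \overline{ {n+m-1 \brack 2m-1 } }_{q,t} z^{2m-1} q^{2m^2 - m} \frac{ (-tzq;q)_{m} }{(zq;q)_{m}} \\&\quad + \sum_{m=1}^{n} \overline{ {n+m-2 \brack 2m-2 } }_{q,t}\, t z^{2m-1} q^{2m^2-m} \frac{ (-tzq;q)_{m-1} }{(zq;q)_{m-1}} . \end{aligned} \]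
   Context: An overpartition is a partition in which the last occurrence of each distinct part size may be overlined; its weight $|\lambda|$ is the sum of its parts. For integers $0\le b\le a$, $\overline{{a \brack b}}_{q,t}=\sum_{\lambda} t^{\#_o(\lambda)} q^{|\lambda|}$, the sum over all overpartitions $\lambda$ with largest part at most $a-b$ and at most $b$ parts, $\#_o(\lambda)$ being the number of overlined parts; for other integer pairs $(a,b)$ it is $0$. $(x;q)_k=\prod_{j=1}^k(1-xq^{j-1})$, $(x;q)_0=1$. *)

From HB Require Import structures.
From mathcomp Require Import all_boot all_order all_algebra.
Set Implicit Arguments. Unset Strict Implicit. Unset Printing Implicit Defensive.
Import Order.TTheory GRing.Theory.
Local Open Scope ring_scope.

(* Formal power series in z over a commutative ring R, represented by
   their coefficient sequences: f k is the coefficient of z^k. *)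
Definition fps (R : Type) := nat -> R.

Section FPS.
Variable R : comNzRingType.

Definition fps_one : fps R := fun k => (k == 0%N)%:R.
Definition fps_add (f g : fps R) : fps R := fun k => f k + g k.
Definition fps_mul (f g : fps R) : fps R :=
  fun k => \sum_(i < k.+1) f i * g (k - i)%N.
Definition fps_monom (c : R) (j : nat) : fps R := fun k => if k == j then c else 0.

(* Multiplicative inverse of a power series with constant term 1:
   b_0 = 1, b_n = - sum_{k=1}^n f_k b_{n-k}  (so that f * b = 1 when f 0 = 1).
   inv_coefs f n = [:: b_0; ...; b_n]. *)
Fixpoint inv_coefs (f : fps R) (n : nat) : seq R :=
  match n with
  | 0 => [:: 1]
  | n'.+1 => let s := inv_coefs f n' in
             rcons s (- \sum_(i < n) f (n - i)%N * nth 0 s i)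
  end.
Definition fps_inv1 (f : fps R) : fps R := fun n => nth 0 (inv_coefs f n) n.

Definition fps_lin (c : R) : fps R :=
  fun k => if k == 0%N then 1 else if k == 1%N then - c else 0.

(* (a z; q)_k = prod_{j=1}^k (1 - a z q^{j-1}) as a power series in z *)
Definition qpoch_z (a q : R) (k : nat) : fps R :=
  foldr fps_mul fps_one [seq fps_lin (a * q ^+ j) | j <- iota 0 k].

Definition poch_ratio (q t : R) (m : nat) : fps R :=
  fps_mul (qpoch_z (- (t * q)) q m) (fps_inv1 (qpoch_z q q m)).

(* Overpartitions with largest part <= a - b and at most b parts.
   Such an overpartition is encoded by f : 'I_(a-b) -> 'I_(b.+1) * bool:
   (f i).1 is the multiplicity of the part size i+1 and (f i).2 says whether
   the last occurrence of that part size is overlined (allowed only if the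
   part size occurs). *)
Definition overpart_ok (a b : nat) (f : {ffun 'I_(a - b) -> 'I_b.+1 * bool}) : bool :=
  ((\sum_(i < a - b) ((f i).1 : nat)) <= b)%N &&
  [forall i, (f i).2 ==> (0 < (f i).1)%N].

Definition overpart_weight (a b : nat) (f : {ffun 'I_(a - b) -> 'I_b.+1 * bool}) : nat :=
  \sum_(i < a - b) (i.+1 * (f i).1)%N.

Definition overpart_novl (a b : nat) (f : {ffun 'I_(a - b) -> 'I_b.+1 * bool}) : nat :=
  \sum_(i < a - b) ((f i).2 : nat).

Definition obinom (q t : R) (a b : nat) : R :=
  if (b <= a)%N then
    \sum_(f : {ffun 'I_(a - b) -> 'I_b.+1 * bool} | overpart_ok f)
      t ^+ overpart_novl f * q ^+ overpart_weight f
  else 0.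

End FPS.

(* Write F_n for (-tzq;q)_n / (zq;q)_n and G(c, b) for the generating function
   of overpartitions with parts at most c and at most b parts, so that the
   overlined binomial [a, b] is G(a - b, b).  Both satisfy a Pascal-type
   recurrence: comparing coefficients in (1 - zq^(n+1)) F_(n+1) = (1 + tzq^(n+1)) F_n
   gives  [z^(k+1)] F_(n+1) = [z^(k+1)] F_n + q^(n+1) ([z^k] F_(n+1) + t [z^k] F_n),
   and splitting off the largest part size gives
   G(c+1, b+1) = G(c, b+1) + q^(c+1) (G(c+1, b) + t G(c, b)).
   The theorem is the case r = 0 of a family of expansions T_r(n) = F_n, valid
   for floor(r/2) + 1 <= n, whose j-th term carries z^j q^(j a_j) with
   a_j = floor((j + r)/2) + 1.  Since a_(j+1) for r is a_j for r + 1, the two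
   recurrences give T_r(n+1) = T_r(n) + q^(n+1) z (T_(r+1)(n+1) + t T_(r+1)(n))
   up to boundary terms.  Hence the family follows by induction on n and, for
   fixed n, by descending induction on r, starting from the r for which T_r(n)
   is empty. *)

From mathcomp Require Import all_boot all_order all_algebra.
From mathcomp Require Import ring zify.
From Stdlib Require Import FunctionalExtensionality.
Set Implicit Arguments. Unset Strict Implicit. Unset Printing Implicit Defensive.
Import GRing.Theory.
Local Open Scope ring_scope.

Section PowerSeries.
Variable R : comNzRingType.
Implicit Types (f g h : fps R) (c : R).

Definition fps_trunc (N : nat) f : {poly R} := \poly_(i < N) f i.

Lemma fps_mul_trunc N f g k :
  (k < N)%N -> fps_mul f g k = (fps_trunc N f * fps_trunc N g)`_k.
Proof.
move=> kN; rewrite coefM; apply: eq_bigr => i _.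
by rewrite !coef_poly !ifT //; have := ltn_ord i; lia.
Qed.

Lemma coef_fps_trunc_mul N f g i : (i < N)%N ->
  (fps_trunc N (fps_mul f g))`_i = (fps_trunc N f * fps_trunc N g)`_i.
Proof. by move=> iN; rewrite coef_poly iN (fps_mul_trunc _ _ iN). Qed.

Lemma coefM_low (P P' Q : {poly R}) k :
  (forall i, (i <= k)%N -> P`_i = P'`_i) -> (P * Q)`_k = (P' * Q)`_k.
Proof.
move=> eqPP'; rewrite !coefM; apply: eq_bigr => i _.
by rewrite eqPP' // -ltnS.
Qed.

Lemma fps_mulC f g : fps_mul f g = fps_mul g f.
Proof.
apply: functional_extensionality => k.
by rewrite !(@fps_mul_trunc k.+1) // mulrC.
Qed.

Lemma fps_mulA f g h : fps_mul f (fps_mul g h) = fps_mul (fps_mul f g) h.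
Proof.
apply: functional_extensionality => k.
have low_trunc u v i : (i <= k)%N ->
    (fps_trunc k.+1 (fps_mul u v))`_i = (fps_trunc k.+1 u * fps_trunc k.+1 v)`_i.
  by move=> ik; rewrite coef_fps_trunc_mul.
rewrite !(@fps_mul_trunc k.+1) // mulrC (coefM_low _ (low_trunc g h)).
by rewrite (coefM_low _ (low_trunc f g)) mulrC mulrA.
Qed.

Lemma fps_mul1 f : fps_mul (fps_one R) f = f.
Proof.
apply: functional_extensionality => k.
rewrite /fps_mul big_ord_recl /fps_one eqxx mul1r subn0 big1 ?addr0 // => i _.
by rewrite mul0r.
Qed.

Lemma fps_mulr1 f : fps_mul f (fps_one R) = f.
Proof. by rewrite fps_mulC fps_mul1. Qed.

Lemma fps_mul_monomE c j g k :
  fps_mul (fps_monom c j) g k = if (j <= k)%N then c * g (k - j)%N else 0.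
Proof.
rewrite /fps_mul /fps_monom.
rewrite (eq_bigr (fun i : 'I_k.+1 => if i == j :> nat then c * g (k - i)%N else 0)).
  by rewrite -big_mkcond /= (big_ord1_eq _ (fun i => c * g (k - i)%N)) ltnS.
by move=> i _; case: eqP; rewrite ?mul0r.
Qed.

Lemma fps_mul_linE c g k :
  fps_mul g (fps_lin c) k = if k is k'.+1 then g k - c * g k' else g 0%N.
Proof.
rewrite fps_mulC /fps_mul big_ord_recl /fps_lin /= subn0 mul1r.
case: k => [|k]; first by rewrite big_ord0 addr0.
rewrite big_ord_recl big1 ?addr0 => [|i _]; last by rewrite mul0r.
by rewrite /= subSS subn0 mulNr.
Qed.

Lemma size_inv_coefs f n : size (inv_coefs f n) = n.+1.
Proof. by elim: n => //= n IH; rewrite size_rcons IH. Qed.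

Lemma nth_inv_coefs f n i : (i <= n)%N -> nth 0 (inv_coefs f n) i = fps_inv1 f i.
Proof.
elim: n => [|n IH] le_in; first by case: i le_in.
rewrite leq_eqVlt in le_in; case/orP: le_in => [/eqP -> //|lt_in].
by rewrite /= nth_rcons size_inv_coefs lt_in IH.
Qed.

Lemma fps_inv1S f n :
  fps_inv1 f n.+1 = - \sum_(i < n.+1) f (n.+1 - i)%N * fps_inv1 f i.
Proof.
rewrite {1}/fps_inv1 /= nth_rcons size_inv_coefs ltnn eqxx.
by congr (- _); apply: eq_bigr => i _; rewrite nth_inv_coefs // -ltnS.
Qed.

Lemma fps_mul_inv1 f : f 0%N = 1 -> fps_mul f (fps_inv1 f) = fps_one R.
Proof.
move=> f0; apply: functional_extensionality => -[|k].
  by rewrite /fps_mul big_ord1 f0 mul1r.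
rewrite /fps_mul big_ord_recl f0 mul1r subn0 fps_inv1S (reindex_inj rev_ord_inj).
rewrite [X in - X](eq_bigr (fun i : 'I_k.+1 => f (bump 0 i) * fps_inv1 f (k.+1 - bump 0 i)%N)).
  by rewrite addNr.
by move=> i _; rewrite /bump /=; congr (f _ * fps_inv1 f _); have := ltn_ord i; lia.
Qed.

Lemma fps_inv1_unique f g :
  f 0%N = 1 -> fps_mul f g = fps_one R -> g = fps_inv1 f.
Proof.
move=> f0 fg1.
by rewrite -[g]fps_mulr1 -(fps_mul_inv1 f0) fps_mulA [fps_mul g f]fps_mulC fg1 fps_mul1.
Qed.

Lemma qpoch_zS (a q : R) n :
  qpoch_z a q n.+1 = fps_mul (qpoch_z a q n) (fps_lin (a * q ^+ n)).
Proof.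
rewrite /qpoch_z -addn1 iotaD map_cat foldr_cat /= add0n fps_mulr1.
elim: (map _ _) => [|h s IH] /=; first by rewrite fps_mul1.
by rewrite IH fps_mulA.
Qed.

Lemma qpoch_z_coef0 (a q : R) n : qpoch_z a q n 0%N = 1.
Proof.
by elim: n => [|n IH]; rewrite ?qpoch_zS ?fps_mul_linE ?IH.
Qed.

End PowerSeries.

Section PochhammerRatio.
Variables (R : comNzRingType) (q t : R).
Local Notation F := (poch_ratio q t).

Lemma poch_ratio0 : F 0 = fps_one R.
Proof.
rewrite /poch_ratio /qpoch_z /= fps_mul1.
by rewrite -[RHS](fps_mul_inv1 (f := fps_one R)) ?fps_mul1.
Qed.

Lemma poch_ratio_mul_lin n :
  fps_mul (F n.+1) (fps_lin (q * q ^+ n)) = fps_mul (F n) (fps_lin (- (t * q) * q ^+ n)).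
Proof.
have inv_step : fps_inv1 (qpoch_z q q n) =
    fps_mul (fps_inv1 (qpoch_z q q n.+1)) (fps_lin (q * q ^+ n)).
  apply/esym/fps_inv1_unique; first exact: qpoch_z_coef0.
  rewrite [fps_mul (fps_inv1 _) _]fps_mulC fps_mulA -qpoch_zS.
  by rewrite fps_mul_inv1 // qpoch_z_coef0.
rewrite /poch_ratio inv_step qpoch_zS -!fps_mulA; congr fps_mul.
by rewrite fps_mulC -fps_mulA [fps_mul (fps_lin _) _]fps_mulC.
Qed.

Lemma poch_ratio_coefS n k :
  F n.+1 k.+1 = F n k.+1 + q ^+ n.+1 * (F n.+1 k + t * F n k).
Proof.
have := congr1 (fun f => f k.+1) (poch_ratio_mul_lin n); rewrite /= !fps_mul_linE.
by move/(congr1 (fun x => x + q * q ^+ n * F n.+1 k)); rewrite subrK exprS => ->; ring.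
Qed.

Lemma poch_ratio_coef0 n : F n 0%N = 1.
Proof.
elim: n => [|n IH]; first by rewrite poch_ratio0.
by have := congr1 (fun f => f 0%N) (poch_ratio_mul_lin n); rewrite /= !fps_mul_linE IH.
Qed.

End PochhammerRatio.

Section FfunSnoc.
Variables (X : Type) (c : nat).

Definition ffun_snoc (p : X * {ffun 'I_c -> X}) : {ffun 'I_c.+1 -> X} :=
  [ffun i => if unlift ord_max i is Some j then p.2 j else p.1].

Lemma ffun_snoc_bij : bijective ffun_snoc.
Proof.
exists (fun f : {ffun 'I_c.+1 -> X} => (f ord_max, [ffun j => f (lift ord_max j)])).
  move=> [x g]; rewrite /ffun_snoc /= ffunE unlift_none; congr (_, _).
  by apply/ffunP => j; rewrite !ffunE liftK.
move=> f; apply/ffunP => i; rewrite /ffun_snoc ffunE /=.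
by case: (unliftP ord_max i) => [j ->|->]; rewrite ?ffunE.
Qed.

Lemma ffun_snoc_lift p (j : 'I_c) : ffun_snoc p (lift ord_max j) = p.2 j.
Proof. by rewrite /ffun_snoc ffunE liftK. Qed.

Lemma ffun_snoc_max p : ffun_snoc p ord_max = p.1.
Proof. by rewrite /ffun_snoc ffunE unlift_none. Qed.

Lemma sum_ffun_snoc (G : nat -> X -> nat) p :
  (\sum_(i < c.+1) G i (ffun_snoc p i) = \sum_(i < c) G i (p.2 i) + G c p.1)%N.
Proof.
rewrite big_ord_recr /= ffun_snoc_max; congr (_ + _)%N; apply: eq_bigr => i _.
have -> : widen_ord (leqnSn c) i = lift ord_max i by apply/val_inj/esym/lift_max.
by rewrite ffun_snoc_lift.
Qed.

Lemma forall_ffun_snoc (P : pred X) p :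
  [forall i, P (ffun_snoc p i)] = [forall j, P (p.2 j)] && P p.1.
Proof.
apply/forallP/andP => [allP|[/forallP allP Pp1] i].
  split; last by have := allP ord_max; rewrite ffun_snoc_max.
  by apply/forallP => j; have := allP (lift ord_max j); rewrite ffun_snoc_lift.
by case: (unliftP ord_max i) => [j ->|->]; rewrite ?ffun_snoc_lift ?ffun_snoc_max.
Qed.

End FfunSnoc.

Section Overpartitions.
Variables (R : comNzRingType) (q t : R).

(* Choose the multiplicity m of the part size c; if m > 0, its last
   occurrence may be overlined. *)
Fixpoint ovp_gen (c b : nat) : R :=
  if c is c'.+1 then
    \sum_(m < b.+1) (if m == 0%N :> nat then 1 else 1 + t) * q ^+ (c * m) * ovp_gen c' (b - m)
  else 1.

Lemma ovp_gen_c0 c : ovp_gen c 0 = 1.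
Proof. by elim: c => //= c IH; rewrite big_ord1 muln0 expr0 !mul1r IH. Qed.

Lemma ovp_genS c b :
  ovp_gen c.+1 b.+1 = ovp_gen c b.+1 + q ^+ c.+1 * (ovp_gen c.+1 b + t * ovp_gen c b).
Proof.
rewrite /= big_ord_recl muln0 expr0 !mul1r subn0; congr (_ + _).
rewrite big_ord_recl [in RHS]big_ord_recl /= !muln0 !muln1 expr0 subn0 subn1 /=.
rewrite (eq_bigr (fun i : 'I_b => q ^+ c.+1 *
    ((1 + t) * q ^+ (c.+1 * bump 0 i) * ovp_gen c (b - bump 0 i)))) => [|i _].
  by rewrite -big_distrr /=; ring.
by rewrite /bump /= subSS (mulnSr c.+1) addnC exprD; ring.
Qed.

Section Counting.
Variables (c B : nat).
Local Notation X := ('I_B.+1 * bool)%type.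
Implicit Types (b : nat) (f : {ffun 'I_c -> X}).

Definition ovp_fit b f : bool :=
  ((\sum_(i < c) ((f i).1 : nat)) <= b)%N && [forall i, (f i).2 ==> (0 < (f i).1)%N].
Definition ovp_weight f : nat := \sum_(i < c) (i.+1 * (f i).1)%N.
Definition ovp_novl f : nat := \sum_(i < c) ((f i).2 : nat).

(* With the multiplicity bound B fixed in the type, the bound b on the number
   of parts can decrease along the recursion. *)
Definition ovp_sum b : R := \sum_(f | ovp_fit b f) t ^+ ovp_novl f * q ^+ ovp_weight f.

End Counting.

Lemma ovp_fit_snoc c B b (x : 'I_B.+1 * bool) (g : {ffun 'I_c -> 'I_B.+1 * bool}) :
  ovp_fit b (ffun_snoc (x, g))
  = ((x.1 <= b)%N && (x.2 ==> (0 < x.1)%N)) && ovp_fit (b - x.1) g.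
Proof.
rewrite /ovp_fit (sum_ffun_snoc (fun _ (y : 'I_B.+1 * bool) => (y.1 : nat))).
rewrite (forall_ffun_snoc (fun y : 'I_B.+1 * bool => y.2 ==> (0 < y.1)%N)) /=.
case: (leqP x.1 b) => [le_xb|lt_bx] /=.
  rewrite -[(_ <= b - x.1)%N](leq_add2r x.1) subnK //.
  by case: (_ ==> _); rewrite ?andbT ?andbF.
by rewrite leqNgt (leq_trans lt_bx) ?leq_addl.
Qed.

Lemma ovp_monom_snoc c B (x : 'I_B.+1 * bool) (g : {ffun 'I_c -> 'I_B.+1 * bool}) :
  t ^+ ovp_novl (ffun_snoc (x, g)) * q ^+ ovp_weight (ffun_snoc (x, g))
  = t ^+ x.2 * q ^+ (c.+1 * x.1) * (t ^+ ovp_novl g * q ^+ ovp_weight g).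
Proof.
rewrite /ovp_novl /ovp_weight (sum_ffun_snoc (fun _ (y : 'I_B.+1 * bool) => (y.2 : nat))).
by rewrite (sum_ffun_snoc (fun i (y : 'I_B.+1 * bool) => i.+1 * y.1)%N) !exprD; ring.
Qed.

Lemma ovp_sum0 B b : ovp_sum 0 B b = 1.
Proof.
rewrite /ovp_sum (big_pred1 [ffun=> (ord0, false)]) => [|f].
  by rewrite /ovp_novl /ovp_weight !big_ord0 mulr1.
rewrite /ovp_fit big_ord0 /=.
have -> : f == [ffun=> (ord0, false)] by apply/eqP/ffunP => -[].
by apply/forallP => -[].
Qed.

Lemma ovp_sumS c B b : (b <= B)%N ->
  ovp_sum c.+1 B b = \sum_(m < b.+1)
    (if m == 0%N :> nat then 1 else 1 + t) * q ^+ (c.+1 * m) * ovp_sum c B (b - m).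
Proof.
move=> le_bB; rewrite /ovp_sum (reindex (@ffun_snoc _ c)); last first.
  exact: onW_bij (@ffun_snoc_bij _ c).
rewrite (eq_bigl _ _ (fun p => ovp_fit_snoc b p.1 p.2)).
under eq_bigr => p _ do rewrite ovp_monom_snoc.
rewrite -(pair_big_dep (fun x : 'I_B.+1 * bool => (x.1 <= b)%N && (x.2 ==> (0 < x.1)%N))
  (fun x g => ovp_fit (b - x.1) g)
  (fun x g => t ^+ x.2 * q ^+ (c.+1 * x.1) * (t ^+ ovp_novl g * q ^+ ovp_weight g))) /=.
under eq_bigr => x _ do rewrite -big_distrr /=.
rewrite -(pair_big_dep (fun m : 'I_B.+1 => (m <= b)%N) (fun m (o : bool) => o ==> (0 < m)%N)
  (fun m o => t ^+ o * q ^+ (c.+1 * m) * ovp_sum c B (b - m))) /=.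
rewrite (big_ord_widen B.+1 (fun m => (if m == 0%N :> nat then 1 else 1 + t)
  * q ^+ (c.+1 * m) * ovp_sum c B (b - m))) // ; apply: eq_bigr => m _.
by rewrite big_mkcond big_bool /=; case: (posnP m) => [->|m_gt0] /=; ring.
Qed.

Lemma ovp_sum_gen c B b : (b <= B)%N -> ovp_sum c B b = ovp_gen c b.
Proof.
elim: c b => [|c IH] b le_bB; first by rewrite ovp_sum0.
rewrite ovp_sumS //=; apply: eq_bigr => m _.
by rewrite IH // (leq_trans (leq_subr m b)).
Qed.

Lemma obinom_ovp_gen a b : (b <= a)%N -> obinom q t a b = ovp_gen (a - b) b.
Proof. by move=> le_ba; rewrite /obinom le_ba -(ovp_sum_gen (a - b) (leqnn b)). Qed.

End Overpartitions.

Lemma sum_ord_double (V : nmodType) (f : nat -> V) N :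
  \sum_(j < N.*2) f j = \sum_(m < N) (f (2 * m)%N + f (2 * m).+1).
Proof.
elim: N => [|N IH]; first by rewrite !big_ord0.
by rewrite doubleS !big_ord_recr /= IH -mul2n addrA.
Qed.

Definition halfS (r j : nat) : nat := ((j + r)./2).+1.
Arguments halfS : simpl never.

Lemma halfSS r j : halfS r j.+1 = halfS r.+1 j.
Proof. by rewrite /halfS addSn addnS. Qed.

Lemma halfS_ge r j : (halfS r 0 <= halfS r j)%N.
Proof. by rewrite /halfS ltnS half_leq // leq_add2r. Qed.

Lemma halfS01 r : (halfS r 0 <= halfS r 1 <= (halfS r 0).+1)%N.
Proof. by rewrite halfS_ge /halfS !ltnS add0n add1n /= uphalf_half; case: odd. Qed.

Lemma halfS_gt r n : (n.*2 <= r)%N -> (n < halfS r 0)%N.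
Proof. by rewrite /halfS ltnS add0n geq_half_double. Qed.

Lemma halfS0_even m : halfS 0 (2 * m) = m.+1.
Proof. by rewrite /halfS addn0 mul2n doubleK. Qed.

Lemma halfS0_odd m : halfS 0 (2 * m).+1 = m.+1.
Proof. by rewrite /halfS addn0 mul2n /= uphalf_double. Qed.

Section ShiftedIdentity.
Variables (R : comNzRingType) (q t : R).
Local Notation F := (poch_ratio q t).
Local Notation G := (ovp_gen q t).

Lemma if_leqS (a n : nat) (x : R) :
  (if (a <= n.+1)%N then x else 0) = (if (a <= n)%N then x else 0) + (if a == n.+1 then x else 0).
Proof.
case: (ltngtP a n.+1) => [lt_an|lt_na|->]; rewrite ?ltnn ?add0r ?addr0 //.
  by rewrite -ltnS lt_an.
by rewrite leqNgt ltnW.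
Qed.

Definition ovp_gen_prev (c j : nat) : R := if j is j'.+1 then G c j' else 0.

Lemma ovp_gen_prevS c j : ovp_gen_prev c.+1 j.+1
  = ovp_gen_prev c j.+1 + q ^+ c.+1 * (ovp_gen_prev c.+1 j + t * ovp_gen_prev c j).
Proof.
case: j => [|j]; last exact: ovp_genS.
by rewrite /ovp_gen_prev !ovp_gen_c0; ring.
Qed.

Lemma ovp_gen_prevE c j : (0 < j)%N -> ovp_gen_prev c j = G c j.-1.
Proof. by case: j. Qed.

(* The coefficient of z^k in the j-th term of T_r(n), with halfS r j = a_j.
   The guard a_j <= n is needed because of truncated subtraction; for r = 0,
   even j = 2m gives the first sum of the theorem and odd j = 2m + 1 the
   last two. *)
Definition shifted_coef (r n k j : nat) : R :=
  if (halfS r j <= n)%N && (j <= k)%N then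
    q ^+ (j * halfS r j) * (G (n - halfS r j)%N j * F (halfS r j.+1).-1 (k - j)%N
      + t * ovp_gen_prev (n - halfS r j)%N j * F (halfS r j).-1 (k - j)%N)
  else 0.

Definition shifted_sum (r n k : nat) : R := \sum_(j < k.+1) shifted_coef r n k j.

Lemma shifted_coef0 r n k :
  shifted_coef r n k 0 = if (halfS r 0 <= n)%N then F (halfS r 1).-1 k else 0.
Proof.
by rewrite /shifted_coef andbT; case: ifP => // _; rewrite ovp_gen_c0 subn0 mul0n /=; ring.
Qed.

Lemma shifted_coef_gt r n k j : (k < j)%N -> shifted_coef r n k j = 0.
Proof. by move=> lt_kj; rewrite /shifted_coef (leqNgt j k) lt_kj andbF. Qed.

Lemma shifted_coef_out r n k j : (n < halfS r j)%N -> shifted_coef r n k j = 0.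
Proof. by move=> lt_na; rewrite /shifted_coef leqNgt lt_na. Qed.

Lemma shifted_coefS r n k j :
  shifted_coef r n.+1 k.+1 j.+1 = shifted_coef r n k.+1 j.+1
    + q ^+ n.+1 * (shifted_coef r.+1 n.+1 k j + t * shifted_coef r.+1 n k j)
    + (if (j == 0%N) && (halfS r 1 == n.+1) then t * q ^+ n.+1 * F n k else 0).
Proof.
rewrite /shifted_coef !halfSS subSS ltnS.
have [le_jk|lt_kj] := leqP j k; last first.
  by rewrite !andbF; case: j lt_kj => // j _; rewrite addr0; ring.
rewrite !andbT; set a := halfS r.+1 j.
have -> : (j == 0%N) && (halfS r.+1 0 == n.+1) = (j == 0%N) && (a == n.+1).
  by case: j {le_jk} @a.
clearbody a.
have [lt_an|lt_na|->] := ltngtP a n.+1.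
- have le_an : (a <= n)%N by rewrite -ltnS.
  have -> : q ^+ n.+1 = q ^+ a * q ^+ (n - a).+1 by rewrite -exprD addnS subnKC.
  by rewrite le_an andbF subSn // ovp_genS ovp_gen_prevS mulSn exprD; ring.
- by rewrite leqNgt ltnW //= andbF; ring.
- rewrite ltnn subnn mulSn exprD andbT.
  by case: j {le_jk} => [|j] /=; rewrite ?mul0n ?subn0; ring.
Qed.

Lemma shifted_sum0 r n : shifted_sum r n 0 = if (halfS r 0 <= n)%N then 1 else 0.
Proof. by rewrite /shifted_sum big_ord1 shifted_coef0 poch_ratio_coef0. Qed.

Lemma shifted_sum_out r n k : (n < halfS r 0)%N -> shifted_sum r n k = 0.
Proof.
move=> lt_na; apply: big1 => j _; apply: shifted_coef_out.
exact: leq_trans lt_na (halfS_ge r j).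
Qed.

Lemma shifted_sumS r n k :
  shifted_sum r n.+1 k.+1 = shifted_sum r n k.+1
    + q ^+ n.+1 * (shifted_sum r.+1 n.+1 k
        + t * (shifted_sum r.+1 n k + (if halfS r 1 == n.+1 then F n k else 0)))
    + (if halfS r 0 == n.+1 then F (halfS r 1).-1 k.+1 else 0).
Proof.
have boundary : \sum_(j < k.+1)
    (if (j == 0%N :> nat) && (halfS r 1 == n.+1) then t * q ^+ n.+1 * F n k else 0)
    = q ^+ n.+1 * (t * (if halfS r 1 == n.+1 then F n k else 0)).
  by rewrite big_ord_recl big1 ?addr0 //=; case: ifP => _; ring.
rewrite /shifted_sum big_ord_recl [in RHS]big_ord_recl !shifted_coef0 if_leqS.
under eq_bigr => j _ do rewrite shifted_coefS.
under [in RHS]eq_bigr => j _ do rewrite lift0.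
by rewrite !big_split boundary /= -big_distrr big_split -big_distrr /=; ring.
Qed.

Lemma poch_ratio_shift_cases a0 a1 n k : (a0 <= a1 <= a0.+1)%N ->
  (if (a0 <= n)%N then F n k.+1 else 0)
    + q ^+ n.+1 * ((if (a1 <= n.+1)%N then F n.+1 k else 0)
        + t * ((if (a1 <= n)%N then F n k else 0) + (if a1 == n.+1 then F n k else 0)))
    + (if a0 == n.+1 then F a1.-1 k.+1 else 0)
  = if (a0 <= n.+1)%N then F n.+1 k.+1 else 0.
Proof.
case/andP=> le_a01 le_a10; rewrite -if_leqS poch_ratio_coefS.
have [lt_a0n|lt_na0|eq_a0n] := ltngtP a0 n.+1.
- by rewrite -ltnS lt_a0n (leq_trans le_a10 lt_a0n) addr0.
- rewrite leqNgt ltnW // [(a1 <= _)%N]leqNgt (leq_trans lt_na0 le_a01) /=.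
  by rewrite !(mulr0, addr0).
- rewrite eq_a0n ltnn in le_a01 le_a10 *; clear eq_a0n.
  have [->|ne_a1n] := eqVneq a1 n.+1; first by rewrite leqnn /=; ring.
  have -> : a1 = n.+2 by apply/eqP; rewrite eqn_leq le_a10 ltn_neqAle eq_sym ne_a1n.
  by rewrite ltnn /= poch_ratio_coefS; ring.
Qed.

Lemma shifted_sumE n r k : shifted_sum r n k = if (halfS r 0 <= n)%N then F n k else 0.
Proof.
elim: n r k => [|n IHn] r k.
  by rewrite shifted_sum_out // leqNgt.
have [d le_rd] : exists d, (n.+1.*2 <= d + r)%N by exists n.+1.*2; rewrite leq_addr.
elim: d r le_rd k => [|d IHd] r le_rd [|k].
- by rewrite shifted_sum0 poch_ratio_coef0.
- have lt_na : (n.+1 < halfS r 0)%N by apply: halfS_gt; rewrite -[r]add0n.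
  by rewrite shifted_sum_out // leqNgt lt_na.
- by rewrite shifted_sum0 poch_ratio_coef0.
rewrite shifted_sumS !IHn IHd; last by rewrite addnS -addSn.
by rewrite -halfSS; apply/poch_ratio_shift_cases/halfS01.
Qed.

Lemma shifted_sum_pairs n k : shifted_sum 0 n k
  = \sum_(m < n) (shifted_coef 0 n k (2 * m) + shifted_coef 0 n k (2 * m).+1).
Proof.
rewrite /shifted_sum (big_ord_widen (n + k.+1).*2 (shifted_coef 0 n k)); last by lia.
rewrite big_mkcond /= (eq_bigr (fun j : 'I_(n + k.+1).*2 => shifted_coef 0 n k j)); last first.
  by move=> j _; case: ltnP => // lt_kj; rewrite shifted_coef_gt.
rewrite sum_ord_double big_split_ord /= [X in _ + X]big1 ?addr0 // => m _.
by rewrite !shifted_coef_out ?addr0 // ?halfS0_even ?halfS0_odd ltnS leq_addr.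
Qed.

Lemma shifted_coef_even n k m : (0 < m < n)%N ->
  shifted_coef 0 n k (2 * m) =
  fps_mul (fps_monom ((obinom q t (n + m - 1) (2 * m) + t * obinom q t (n + m - 2) (2 * m - 1))
                      * q ^+ (2 * m ^ 2 + 2 * m)) (2 * m)) (F m) k.
Proof.
case/andP=> m_gt0 lt_mn.
rewrite fps_mul_monomE /shifted_coef halfS0_even halfS0_odd lt_mn andTb.
case: ifP => // _; rewrite ovp_gen_prevE ?muln_gt0 // !obinom_ovp_gen; try lia.
have -> : (n + m - 1 - 2 * m = n - m.+1)%N by lia.
have -> : (n + m - 2 - (2 * m - 1) = n - m.+1)%N by lia.
have -> : (2 * m * m.+1 = 2 * m ^ 2 + 2 * m)%N by lia.
by rewrite succnK subn1; ring.
Qed.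

Lemma shifted_coef_odd n k m : (m < n)%N ->
  shifted_coef 0 n k (2 * m).+1 =
  fps_mul (fps_monom (obinom q t (n + m.+1 - 1) (2 * m.+1 - 1) * q ^+ (2 * m.+1 ^ 2 - m.+1))
                     (2 * m.+1 - 1)) (F m.+1) k
  + fps_mul (fps_monom (obinom q t (n + m.+1 - 2) (2 * m.+1 - 2) * t
                        * q ^+ (2 * m.+1 ^ 2 - m.+1)) (2 * m.+1 - 1)) (F (m.+1 - 1)) k.
Proof.
move=> lt_mn; rewrite !fps_mul_monomE /shifted_coef halfS0_odd.
have -> : ((2 * m).+2 = 2 * m.+1)%N by lia.
have -> : (2 * m.+1 - 1 = (2 * m).+1)%N by lia.
rewrite halfS0_even lt_mn andTb.
case: ifP => _; last by rewrite addr0.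
rewrite ovp_gen_prevE // !obinom_ovp_gen; try lia.
have -> : (n + m.+1 - 1 - (2 * m).+1 = n - m.+1)%N by lia.
have -> : (n + m.+1 - 2 - (2 * m.+1 - 2) = n - m.+1)%N by lia.
have -> : (2 * m.+1 - 2 = 2 * m)%N by lia.
have -> : ((2 * m).+1 * m.+1 = 2 * m.+1 ^ 2 - m.+1)%N by rewrite expnS expn1; lia.
by rewrite subn1 !succnK; ring.
Qed.

Lemma poch_ratio_pairs n k : (0 < n)%N ->
  F n k = fps_one R k + \sum_(1 <= m < n) shifted_coef 0 n k (2 * m)
                      + \sum_(0 <= m < n) shifted_coef 0 n k (2 * m).+1.
Proof.
move=> n_gt0; have := shifted_sumE n 0 k; rewrite [halfS 0 0]/halfS n_gt0 => <-.
rewrite shifted_sum_pairs big_split /=.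
rewrite -(big_mkord xpredT (fun m => shifted_coef 0 n k (2 * m))).
rewrite -(big_mkord xpredT (fun m => shifted_coef 0 n k (2 * m).+1)).
rewrite big_ltn // shifted_coef0.
by rewrite [halfS 0 0]/halfS n_gt0 [halfS 0 1]/halfS poch_ratio0.
Qed.

End ShiftedIdentity.

Theorem theorem4p3 (R : comNzRingType) (q t : R) (n : nat) :
  (0 < n)%N ->
  forall k : nat,
    poch_ratio q t n k =
      fps_one R k
      + \sum_(1 <= m < n)
          fps_mul (fps_monom
                     ((obinom q t (n + m - 1) (2 * m)
                       + t * obinom q t (n + m - 2) (2 * m - 1))
                      * q ^+ (2 * m ^ 2 + 2 * m)) (2 * m))
                  (poch_ratio q t m) k
      + \sum_(1 <= m < n.+1)
          fps_mul (fps_monom (obinom q t (n + m - 1) (2 * m - 1)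
                              * q ^+ (2 * m ^ 2 - m)) (2 * m - 1))
                  (poch_ratio q t m) k
      + \sum_(1 <= m < n.+1)
          fps_mul (fps_monom (obinom q t (n + m - 2) (2 * m - 2) * t
                              * q ^+ (2 * m ^ 2 - m)) (2 * m - 1))
                  (poch_ratio q t (m - 1)) k.
Proof.
move=> n_gt0 k; rewrite poch_ratio_pairs //.
rewrite (eq_big_nat _ _ (fun m lt_mn => shifted_coef_even q t k lt_mn)).
rewrite (eq_big_nat _ _ (fun m lt_mn => shifted_coef_odd q t k (proj2 (andP lt_mn)))).
by rewrite big_split /= !big_add1 /= !addrA.
Qed.
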